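(* Let $G$ be a finite simple graph with a vertex $v$ such that $\deg(v)\leq k$, and let $m\ge 1$. Then the $(m-k-1)$-skeleton of $\mathrm{Hom}(G\setminus\{v\},K_m)$ is contained in $\mathrm{Hom}_{\{v\}}(G,K_m)$.
   Context: Graphs are finite, undirected and simple; $K_m$ is the complete graph on $m$ vertices; $G\setminus\{v\}$ is the induced subgraph on $V(G)\setminus\{v\}$. For graphs $G,H$, the homomorphism complex $\mathrm{Hom}(G,H)$ is the polyhedral complex whose cells are functions $\eta:V(G)\to 2^{V(H)}\setminus\{\varnothing\}$ such that whenever $\{x,y\}\in E(G)$ we have $\eta(x)\times\eta(y)\subseteq E(H)$; the cell $\eta$ is a product of simplices of dimension $\sum_{v\in V(G)}(|\eta(v)|-1)$, with $\eta\subseteq\tau$ iff $\eta(v)\subseteq\tau(v)$ for all $v$. For an independent set $I$ of $G$, $\mathrm{Hom}_I(G,H)$ is the subcomplex of $\mathrm{Hom}(G\setminus I,H)$ consisting of all cells $\eta\in\mathrm{Hom}(G\setminus I,H)$ for which there exists a cell $\overline{\eta}\in\mathrm{Hom}(G,H)$ with $\overline{\eta}|_{V(G)\setminus I}=\eta$. *)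

From mathcomp Require Import all_boot all_order all_algebra.
Set Implicit Arguments. Unset Strict Implicit. Unset Printing Implicit Defensive.

Definition simple_graph (T : finType) (e : rel T) : Prop :=
  symmetric e /\ irreflexive e.

Definition deg (T : finType) (e : rel T) (v : T) : nat := #|[set u | e v u]|.

Definition K (m : nat) : rel 'I_m := fun a b => a != b.

Definition independent (T : finType) (e : rel T) (I : {set T}) : Prop :=
  forall x y, x \in I -> y \in I -> ~~ e x y.

Definition hom_cell (T S : finType) (e : rel T) (eH : rel S) (eta : T -> {set S}) : Prop :=
  (forall x, eta x != set0) /\
  (forall x y, e x y -> forall a b, a \in eta x -> b \in eta y -> eH a b).

Definition cell_dim (T S : finType) (eta : T -> {set S}) : nat :=
  \sum_(x : T) (#|eta x| - 1).

Notation del_vtx I := {x | x \notin I}.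
Definition del_rel (T : finType) (e : rel T) (I : {set T}) : rel (del_vtx I) :=
  fun x y => e (sval x) (sval y).
Arguments del_rel {T} e I.

Definition homI_cell (T S : finType) (e : rel T) (eH : rel S) (I : {set T})
    (eta : del_vtx I -> {set S}) : Prop :=
  hom_cell (del_rel e I) eH eta /\
  exists etab : T -> {set S}, hom_cell e eH etab /\ forall x : del_vtx I, etab (sval x) = eta x.
Arguments homI_cell {T S} e eH I eta.
Arguments hom_cell {T S} e eH eta.

From mathcomp Require Import all_boot all_order all_algebra.
From mathcomp Require Import zify.

Set Implicit Arguments.
Unset Strict Implicit.
Unset Printing Implicit Defensive.

(* A cell eta of Hom(G \ v, K_m) of dimension d uses at most d + deg v colours
   on the neighbours of v, since a nonempty set eta(y) contributes |eta(y)| - 1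
   to d.  When d + deg v < m some colour c is missed by all of them, and
   sending v to {c} extends eta to a cell of Hom(G, K_m). *)

Lemma card_bigcup_le (I T : finType) (P : pred I) (A : I -> {set T}) :
  #|\bigcup_(i | P i) A i| <= \sum_(i | P i) #|A i|.
Proof.
elim/big_rec2: _ => [|i n U _ leUn]; first by rewrite cards0.
by rewrite (leq_trans (leq_card_setU _ _).1) ?leq_add2l.
Qed.

Lemma sum_card_le_cell_dim (T S : finType) (eta : T -> {set S}) (P : pred T) :
  (forall x, eta x != set0) -> \sum_(x | P x) #|eta x| <= cell_dim eta + #|P|.
Proof.
move=> eta_neq0.
have -> : \sum_(x | P x) #|eta x| = \sum_(x | P x) (#|eta x| - 1) + #|P|.
  rewrite -sum1_card -big_split /=; apply: eq_bigr => x _.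
  by rewrite subnK // card_gt0.
by rewrite leq_add2r /cell_dim [X in _ <= X](bigID P) leq_addr.
Qed.

Lemma exists_notin_set (T : finType) (U : {set T}) : #|U| < #|T| -> exists c, c \notin U.
Proof.
move=> ltUT; have : 0 < #|~: U| by rewrite cardsCs setCK subn_gt0.
by case/card_gt0P => c; rewrite inE; exists c.
Qed.

Section OneVertexExtension.

Variables (V S : finType) (e : rel V) (eH : rel S) (v : V).

Lemma card_del_neighbours_le_deg :
  #|[pred y : del_vtx [set v] | e v (val y)]| <= deg e v.
Proof.
rewrite /deg -(card_imset _ val_inj); apply: subset_leq_card.
by apply/subsetP => _ /imsetP [y vy ->]; rewrite inE.
Qed.

Lemma del_vtx_of {x} : x != v -> {y : del_vtx [set v] | val y = x}.
Proof.
move=> neq_xv; have xD : x \notin [set v] by rewrite inE.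
by exists (exist _ x xD).
Qed.

Definition extend_at (eta : del_vtx [set v] -> {set S}) (A : {set S}) (x : V) :=
  if insub x is Some y then eta y else A.

Variables (eta : del_vtx [set v] -> {set S}) (A : {set S}).

Lemma extend_at_del y : extend_at eta A (val y) = eta y.
Proof. by rewrite /extend_at valK. Qed.

Lemma extend_at_v : extend_at eta A v = A.
Proof. by rewrite /extend_at insubN // negbK inE. Qed.

Lemma hom_cell_extend_at :
  symmetric e -> irreflexive e -> symmetric eH ->
  hom_cell (del_rel e [set v]) eH eta -> A != set0 ->
  (forall y, e v (val y) -> forall a b, a \in A -> b \in eta y -> eH a b) ->
  hom_cell e eH (extend_at eta A).
Proof.
move=> e_sym e_irr eH_sym [eta_neq0 eta_hom] A_neq0 A_hom; split.
  move=> x; case: (eqVneq x v) => [->|/del_vtx_of [y <-]].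
    by rewrite extend_at_v.
  by rewrite extend_at_del.
have edge_at_v x b : e v x -> b \in extend_at eta A x -> forall a, a \in A -> eH a b.
  move=> vx bx a aA; have neq_xv : x != v by apply: contraTneq vx => ->; rewrite e_irr.
  have [y def_x] := del_vtx_of neq_xv; rewrite -def_x extend_at_del in bx.
  by apply: (A_hom y) => //; rewrite def_x.
move=> x y + a b; case: (eqVneq x v) => [-> | /del_vtx_of [x' <-]] xy.
  by rewrite extend_at_v => aA by_; apply: edge_at_v xy by_ a aA.
case: (eqVneq y v) xy => [-> | /del_vtx_of [y' <-]] xy.
  rewrite extend_at_v eH_sym => ax bA.
  by apply: edge_at_v ax b bA; rewrite e_sym.
by rewrite !extend_at_del; apply: eta_hom.
Qed.

End OneVertexExtension.

Local Open Scope ring_scope.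

Theorem lemma3p3 (V : finType) (e : rel V) (v : V) (k m : nat) :
  simple_graph e ->
  (deg e v <= k)%N ->
  (1 <= m)%N ->
  forall eta : del_vtx [set v] -> {set 'I_m},
    hom_cell (del_rel e [set v]) (@K m) eta ->
    ((cell_dim eta)%:Z <= m%:Z - k%:Z - 1) ->
    homI_cell e (@K m) [set v] eta.
Proof.
move=> [e_sym e_irr] deg_le _ eta eta_cell dim_le.
have {dim_le} dim_lt : (cell_dim eta + k < m)%N by lia.
pose N := [pred y : del_vtx [set v] | e v (val y)].
pose U := \bigcup_(y | N y) eta y.
have ltUm : (#|U| < #|'I_m|)%N.
  rewrite card_ord; apply: leq_ltn_trans (card_bigcup_le N eta) _.
  apply: leq_ltn_trans (sum_card_le_cell_dim N eta_cell.1) _.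
  apply: leq_ltn_trans dim_lt; rewrite leq_add2l.
  exact: leq_trans (card_del_neighbours_le_deg e v) deg_le.
have [c cU] := exists_notin_set ltUm.
split=> //; exists (extend_at eta [set c]); split; last exact: extend_at_del.
apply: hom_cell_extend_at => //; first by move=> a b; rewrite /K eq_sym.
  by apply/set0Pn; exists c; rewrite inE.
move=> y vy a b /set1P -> by_; apply: contraNneq cU => ->.
by apply/bigcupP; exists y.
Qed.
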